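(* Let $U=(U_{ij})_{i,j=1}^M$ with $U_{ij}\in M_M(\mathbb C)$ and $V=(V_{ab})_{a,b=1}^N$ with $V_{ab}\in M_N(\mathbb C)$ be projective models, and let $Q\in M_{M\times N}(\mathbb T)$ be arbitrary. Then the matrix $W=U\otimes_QV$, given by $$(W_{ia,jb})_{kc,ld}=\frac{Q_{ic}Q_{jd}}{Q_{id}Q_{jc}}(U_{ij})_{kl}(V_{ab})_{cd},$$ is a projective model, i.e. both $W$ and $W'$ are magic.
   Context: A square matrix with entries in a $C^*$-algebra is magic if its entries are orthogonal projections and each row and each column sums to $1$. For $U=(U_{ij})_{i,j=1}^n$ with $U_{ij}\in M_n(\mathbb C)$, $U'$ is defined by $(U'_{kl})_{ij}=(U_{ij})_{kl}$. $U$ is a projective model if $U$ and $U'$ are both magic. In the formula, $i,j,k,l\in\{1,\dots,M\}$, $a,b,c,d\in\{1,\dots,N\}$, and $W$ is the $MN\times MN$ matrix with entries $W_{ia,jb}\in M_{MN}(\mathbb C)$. *)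

From HB Require Import structures.
From mathcomp Require Import all_boot all_order all_algebra.
From mathcomp Require Import complex.
From mathcomp Require Import Rstruct.
Set Implicit Arguments. Unset Strict Implicit. Unset Printing Implicit Defensive.
Import Order.TTheory GRing.Theory Num.Theory.
Local Open Scope ring_scope.

Definition C : Type := (Rdefinitions.R)[i].

Definition adjmx (m n : nat) (A : 'M[C]_(m, n)) : 'M[C]_(n, m) :=
  \matrix_(i, j) (A j i)^*.

Definition orth_proj (n : nat) (P : 'M[C]_n) : Prop :=
  P *m P = P /\ adjmx P = P.

Definition magic (m n : nat) (U : 'I_m -> 'I_m -> 'M[C]_n) : Prop :=
  [/\ forall i j, orth_proj (U i j),
      forall i, \sum_j U i j = 1%:M
    & forall j, \sum_i U i j = 1%:M].

Definition prime_mx (n : nat) (U : 'I_n -> 'I_n -> 'M[C]_n) :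
  'I_n -> 'I_n -> 'M[C]_n :=
  fun k l => \matrix_(i, j) U i j k l.

Definition projective_model (n : nat) (U : 'I_n -> 'I_n -> 'M[C]_n) : Prop :=
  magic U /\ magic (prime_mx U).

(** The twist [t i j c d = Q i c Q j d / (Q i d Q j c)] is a multiplicative cocycle in
    (c, d) for fixed (i, j) and in (i, j) for fixed (c, d), it equals 1 when [i = j] or
    [c = d], and for unimodular Q its conjugate is the twist with one index pair swapped.
    Hence each defining identity of W and W' reduces to the corresponding identities of
    U and V: in the idempotence sums the twists merge by the cocycle law, and in the row
    and column sums they meet a Kronecker delta that makes them 1. *)
From HB Require Import structures.
From mathcomp Require Import all_boot all_order all_algebra.
From mathcomp Require Import complex.
From mathcomp Require Import Rstruct.
From mathcomp Require Import ring.
Import Order.TTheory GRing.Theory Num.Theory.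
Local Open Scope ring_scope.
Set Implicit Arguments. Unset Strict Implicit.

Section DoubleIndex.
Variables (R : nmodType) (M N : nat).

Lemma sum_mxvec_index (F : 'I_(M * N) -> R) :
  \sum_x F x = \sum_i \sum_a F (mxvec_index i a).
Proof.
rewrite (reindex (uncurry (@mxvec_index M N))) /=; last first.
  have [g g1 g2] := curry_mxvec_bij M N.
  by exists g => x _; [apply: g1 | apply: g2].
by rewrite pair_big /=; apply: eq_bigr => -[i a].
Qed.

Lemma eq_mxvec_index (k l : 'I_M) (c d : 'I_N) :
  (mxvec_index k c == mxvec_index l d) = (k == l) && (c == d).
Proof.
apply/eqP/andP => [|[/eqP -> /eqP ->] //].
move/(congr1 (cast_ord (esym (mxvec_cast M N)))); rewrite !cast_ordK.
by move/enum_rank_inj => [-> ->].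
Qed.

End DoubleIndex.

Section Twist.
Variables (F : fieldType) (M N : nat) (Q : 'M[F]_(M, N)).
Hypothesis Q_neq0 : forall i c, Q i c != 0.

Definition twist i j c d := Q i c * Q j d / (Q i d * Q j c).

Lemma twist_mulr i j c d e : twist i j c d * twist i j d e = twist i j c e.
Proof. by rewrite /twist; field; rewrite !Q_neq0. Qed.

Lemma twist_mull i j m c d : twist i j c d * twist j m c d = twist i m c d.
Proof. by rewrite /twist; field; rewrite !Q_neq0. Qed.

Lemma twist_diagl_delta i j c d : (i == j)%:R * twist i j c d = (i == j)%:R.
Proof.
have [<-|] := eqVneq; rewrite ?mul0r // mul1r.
by rewrite /twist [Q i d * _]mulrC divff // mulf_neq0.
Qed.

Lemma twist_diagr_delta i j c d : twist i j c d * (c == d)%:R = (c == d)%:R.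
Proof.
have [<-|] := eqVneq; rewrite ?mulr0 // mulr1.
by rewrite /twist divff // mulf_neq0.
Qed.

End Twist.

Section UnimodularTwist.
Variables (F : numClosedFieldType) (M N : nat) (Q : 'M[F]_(M, N)).
Hypothesis Q_norm1 : forall i c, `|Q i c| = 1.

Lemma norm1_neq0 i c : Q i c != 0.
Proof. by rewrite -normr_eq0 Q_norm1 oner_eq0. Qed.

Lemma conjC_norm1 i c : (Q i c)^* = (Q i c)^-1.
Proof. by rewrite invC_norm Q_norm1 expr1n invr1 mul1r. Qed.

Lemma conjC_twistr i j c d : (twist Q i j d c)^* = twist Q i j c d.
Proof.
rewrite /twist !(rmorphM, fmorphV) /= !conjC_norm1.
by field; rewrite !norm1_neq0.
Qed.

Lemma conjC_twistl i j c d : (twist Q j i c d)^* = twist Q i j c d.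
Proof.
rewrite /twist !(rmorphM, fmorphV) /= !conjC_norm1.
by field; rewrite !norm1_neq0.
Qed.

End UnimodularTwist.

Section MagicEntries.
Variable n : nat.

Lemma orth_projE (P : 'M[C]_n) :
  orth_proj P <->
  (forall k m, \sum_l P k l * P l m = P k m) /\ (forall k l, (P l k)^* = P k l).
Proof.
split=> [[/matrixP idP /matrixP adjP] | [idP adjP]].
  by split=> k l; [move: (idP k l) | move: (adjP k l)]; rewrite !mxE.
by split; apply/matrixP => k l; rewrite !mxE.
Qed.

Lemma sum_mx_eq1 (I : finType) (P : I -> 'M[C]_n) :
  \sum_j P j = 1%:M <-> forall k l, \sum_j P j k l = (k == l)%:R.
Proof.
split=> [/matrixP sumP k l | sumP]; last by apply/matrixP => k l; rewrite summxE mxE.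
by move: (sumP k l); rewrite summxE mxE.
Qed.

Variables (U : 'I_n -> 'I_n -> 'M[C]_n).
Hypothesis U_model : projective_model U.

Lemma model_idem i j k m : \sum_l U i j k l * U i j l m = U i j k m.
Proof. by case: U_model => -[/(_ i j) /orth_projE [->]]. Qed.

Lemma model_adj i j k l : (U i j l k)^* = U i j k l.
Proof. by case: U_model => -[/(_ i j) /orth_projE [_ ->]]. Qed.

Lemma model_row_sum i k l : \sum_j U i j k l = (k == l)%:R.
Proof. by case: U_model => -[_ /(_ i) /sum_mx_eq1 ->]. Qed.

Lemma model_col_sum j k l : \sum_i U i j k l = (k == l)%:R.
Proof. by case: U_model => -[_ _ /(_ j) /sum_mx_eq1 ->]. Qed.

Lemma model_prime_idem k l i m : \sum_j U i j k l * U j m k l = U i m k l.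
Proof.
case: U_model => _ [/(_ k l) /orth_projE [/(_ i m) + _] _ _].
by rewrite mxE; under eq_bigr do rewrite !mxE.
Qed.

Lemma model_prime_adj k l i j : (U j i k l)^* = U i j k l.
Proof.
case: U_model => _ [/(_ k l) /orth_projE [_ /(_ i j) +] _ _].
by rewrite !mxE.
Qed.

Lemma model_prime_row_sum k i j : \sum_l U i j k l = (i == j)%:R.
Proof.
case: U_model => _ [_ /(_ k) /sum_mx_eq1 /(_ i j) + _].
by under eq_bigr do rewrite mxE.
Qed.

Lemma model_prime_col_sum l i j : \sum_k U i j k l = (i == j)%:R.
Proof.
case: U_model => _ [_ _ /(_ l) /sum_mx_eq1 /(_ i j)].
by under eq_bigr do rewrite mxE.
Qed.

End MagicEntries.

Section TwistedTensor.
Variables (M N : nat) (U : 'I_M -> 'I_M -> 'M[C]_M) (V : 'I_N -> 'I_N -> 'M[C]_N).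
Variables (Q : 'M[C]_(M, N)) (W : 'I_(M * N) -> 'I_(M * N) -> 'M[C]_(M * N)).
Hypotheses (U_model : projective_model U) (V_model : projective_model V).
Hypothesis Q_norm1 : forall i c, `|Q i c| = 1.
Hypothesis WE : forall i j k l a b c d,
  W (mxvec_index i a) (mxvec_index j b) (mxvec_index k c) (mxvec_index l d)
  = twist Q i j c d * U i j k l * V a b c d.

Let Q_neq0 : forall i c, Q i c != 0 := norm1_neq0 Q_norm1.

Lemma twisted_orth_proj x y : orth_proj (W x y).
Proof.
case/mxvec_indexP: x => i a; case/mxvec_indexP: y => j b.
apply/orth_projE; split=> x z.
  case/mxvec_indexP: x => k c; case/mxvec_indexP: z => m e.
  rewrite sum_mxvec_index WE -(model_idem U_model) -(model_idem V_model).
  rewrite -mulrA big_distrlr /= mulr_sumr.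
  apply: eq_bigr => l _; rewrite mulr_sumr; apply: eq_bigr => d _.
  rewrite !WE -(twist_mulr Q_neq0 i j c d e); ring.
case/mxvec_indexP: x => k c; case/mxvec_indexP: z => l d.
by rewrite !WE rmorphM rmorphM /= conjC_twistr // (model_adj U_model) (model_adj V_model).
Qed.

Lemma twisted_row_sum x : \sum_y W x y = 1%:M.
Proof.
case/mxvec_indexP: x => i a; apply/sum_mx_eq1 => x z.
case/mxvec_indexP: x => k c; case/mxvec_indexP: z => l d.
rewrite sum_mxvec_index eq_mxvec_index -mulnb natrM -(model_row_sum U_model i).
rewrite mulr_suml; apply: eq_bigr => j _.
under eq_bigr do rewrite WE.
by rewrite -mulr_sumr (model_row_sum V_model) mulrAC (twist_diagr_delta Q_neq0) mulrC.
Qed.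

Lemma twisted_col_sum y : \sum_x W x y = 1%:M.
Proof.
case/mxvec_indexP: y => j b; apply/sum_mx_eq1 => x z.
case/mxvec_indexP: x => k c; case/mxvec_indexP: z => l d.
rewrite sum_mxvec_index eq_mxvec_index -mulnb natrM -(model_col_sum U_model j).
rewrite mulr_suml; apply: eq_bigr => i _.
under eq_bigr do rewrite WE.
by rewrite -mulr_sumr (model_col_sum V_model) mulrAC (twist_diagr_delta Q_neq0) mulrC.
Qed.

Lemma twisted_prime_orth_proj x y : orth_proj (prime_mx W x y).
Proof.
case/mxvec_indexP: x => k c; case/mxvec_indexP: y => l d.
apply/orth_projE; split=> x z.
  case/mxvec_indexP: x => i a; case/mxvec_indexP: z => m e.
  rewrite sum_mxvec_index !mxE WE.
  rewrite -(model_prime_idem U_model) -(model_prime_idem V_model).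
  rewrite -mulrA big_distrlr /= mulr_sumr.
  apply: eq_bigr => j _; rewrite mulr_sumr; apply: eq_bigr => b _.
  rewrite !mxE !WE -(twist_mull Q_neq0 i j m c d); ring.
case/mxvec_indexP: x => i a; case/mxvec_indexP: z => j b.
rewrite !mxE !WE rmorphM rmorphM /= conjC_twistl //.
by rewrite (model_prime_adj U_model) (model_prime_adj V_model).
Qed.

Lemma twisted_prime_row_sum x : \sum_y prime_mx W x y = 1%:M.
Proof.
case/mxvec_indexP: x => k c; apply/sum_mx_eq1 => x z.
case/mxvec_indexP: x => i a; case/mxvec_indexP: z => j b.
rewrite sum_mxvec_index eq_mxvec_index -mulnb natrM -(model_prime_row_sum V_model c).
rewrite exchange_big /= mulr_sumr; apply: eq_bigr => d _.
under eq_bigr do rewrite mxE WE mulrAC.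
by rewrite -mulr_sumr (model_prime_row_sum U_model) mulrC mulrA (twist_diagl_delta Q_neq0).
Qed.

Lemma twisted_prime_col_sum y : \sum_x prime_mx W x y = 1%:M.
Proof.
case/mxvec_indexP: y => l d; apply/sum_mx_eq1 => x z.
case/mxvec_indexP: x => i a; case/mxvec_indexP: z => j b.
rewrite sum_mxvec_index eq_mxvec_index -mulnb natrM -(model_prime_col_sum V_model d).
rewrite exchange_big /= mulr_sumr; apply: eq_bigr => c _.
under eq_bigr do rewrite mxE WE mulrAC.
by rewrite -mulr_sumr (model_prime_col_sum U_model) mulrC mulrA (twist_diagl_delta Q_neq0).
Qed.

End TwistedTensor.

Unset Implicit Arguments. Set Strict Implicit.

Theorem proposition2p4 (M N : nat)
  (U : 'I_M -> 'I_M -> 'M[C]_M) (V : 'I_N -> 'I_N -> 'M[C]_N)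
  (Q : 'M[C]_(M, N))
  (W : 'I_(M * N) -> 'I_(M * N) -> 'M[C]_(M * N)) :
  projective_model U -> projective_model V ->
  (forall i c, `|Q i c| = 1) ->
  (forall (i j k l : 'I_M) (a b c d : 'I_N),
     W (mxvec_index i a) (mxvec_index j b) (mxvec_index k c) (mxvec_index l d)
     = Q i c * Q j d / (Q i d * Q j c) * U i j k l * V a b c d) ->
  projective_model W.
Proof.
move=> U_model V_model Q_norm1 WE.
split; split.
- exact: (twisted_orth_proj U_model V_model Q_norm1 WE).
- exact: (twisted_row_sum U_model V_model Q_norm1 WE).
- exact: (twisted_col_sum U_model V_model Q_norm1 WE).
- exact: (twisted_prime_orth_proj U_model V_model Q_norm1 WE).
- exact: (twisted_prime_row_sum U_model V_model Q_norm1 WE).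
- exact: (twisted_prime_col_sum U_model V_model Q_norm1 WE).
Qed.
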